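(* Let $G$ be a finite chordal graph. Then every exposed edge of $G$ is contained in a cycle of $G$ all of whose edges are exposed edges of $G$.
   Context: All graphs are finite, undirected, simple. A graph is chordal if every induced cycle has length three. A facet edge of $G$ is an edge $xy$ such that $\{x,y\}$ is a maximal clique of $G$. An edge of $G$ is exposed if it is contained in a unique maximal clique of $G$ and it is not a facet edge. *)

(* A finite simple graph is a symmetric irreflexive
   relation [e : rel T] on a finite type [T]. *)
From mathcomp Require Import all_boot.
Set Implicit Arguments. Unset Strict Implicit. Unset Printing Implicit Defensive.

Section Graph.
Variables (T : finType) (e : rel T).

Definition clique (K : {set T}) : bool :=
  [forall x in K, forall y in K, (x != y) ==> e x y].

Definition max_clique (K : {set T}) : bool := maxset clique K.

Definition facet_edge (x y : T) : bool := e x y && max_clique [set x; y].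

Definition exposed_edge (x y : T) : bool :=
  [&& e x y,
      #|[set K : {set T} | max_clique K & [set x; y] \subset K]| == 1
    & ~~ facet_edge x y].

(* A cycle of the graph, given as a duplicate-free vertex sequence
   v_0, ..., v_{k-1} (k >= 3) whose cyclically consecutive vertices are
   adjacent. Its edges are the pairs {v, next s v}. *)
Definition is_graph_cycle (s : seq T) : bool :=
  [&& uniq s, 3 <= size s & cycle e s].

Definition cycle_has_edge (s : seq T) (x y : T) : bool :=
  ((x \in s) && (next s x == y)) || ((y \in s) && (next s y == x)).

Definition induced_cycle (s : seq T) : bool :=
  is_graph_cycle s &&
  [forall x, forall y, ((x \in s) && (y \in s) && e x y) ==> cycle_has_edge s x y].

Definition chordal : Prop := forall s : seq T, induced_cycle s -> size s = 3.

End Graph.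

From mathcomp Require Import all_boot zify.
Set Implicit Arguments. Unset Strict Implicit. Unset Printing Implicit Defensive.

(* An edge xy is exposed exactly when the common neighbourhood of x and y is a
   nonempty clique.  As xy lies in a triangle, Dirac's lemma provides a
   simplicial vertex v other than x and y.  Deleting v keeps the graph chordal and xy exposed, unless v was the
   only common neighbour of x and y, in which case x v y is a path of exposed
   edges.  An exposed edge ab of G - v stays exposed in G unless v is adjacent
   to both a and b, and then a v b is a path of exposed edges because v is
   simplicial.  By induction on the number of vertices, x and y are joined by a
   walk of exposed edges other than xy; shortened to a path, it closes up with
   xy into the required cycle. *)

Section Sequences.
Variable T : eqType.
Implicit Types (s x y : T) (p : seq T).

Lemma next_cat_cons2 c1 x y c2 :
  uniq (c1 ++ x :: y :: c2) -> next (c1 ++ x :: y :: c2) x = y.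
Proof.
case: c1 => [|h c1]; first by rewrite /next /= eqxx.
move=> uc; rewrite next_nth mem_cat mem_head orbT.
have xNc1 : x \notin h :: c1.
  by move: uc; rewrite cat_uniq => /and3P[_ /hasPn /(_ x (mem_head _ _)) /= ->].
by rewrite index_cat (negbTE xNc1) /= eqxx addn0 nth_cat ltnNge leqnSn /= subSnn.
Qed.

Lemma next_last x p : uniq (x :: p) -> next (x :: p) (last x p) = x.
Proof.
move=> up; rewrite next_nth mem_last.
have lastNb : last x p \notin belast x p by move: up; rewrite lastI rcons_uniq => /andP[].
rewrite [index _ _](_ : _ = size p); first by rewrite nth_default.
by rewrite lastI -cats1 index_cat (negbTE lastNb) /= eqxx addn0 size_belast.
Qed.

Lemma mem_split2 c x y : x \in c -> y \in c -> x != y ->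
  exists c1 c2 c3, c = c1 ++ x :: c2 ++ y :: c3 \/ c = c1 ++ y :: c2 ++ x :: c3.
Proof.
case/splitPr => c1 c2; rewrite mem_cat inE.
case/orP=> [/splitPr[d1 d2] | /predU1P[->|/splitPr[d1 d2]]].
- by exists d1, d2, c2; right; rewrite -catA.
- by rewrite eqxx.
- by exists c1, d1, d2; left.
Qed.

Lemma path_shortcut (r : rel T) s p c1 x w c2 y c3 :
  s :: p = c1 ++ x :: w :: c2 ++ y :: c3 -> path r s p -> r x y ->
  exists p', [/\ path r s p', last s p' = last s p,
                 {subset s :: p' <= s :: p} & size p' < size p].
Proof.
move=> sp rsp rxy.
have [p' sp'] : exists p', s :: p' = c1 ++ x :: y :: c3.
  by case: c1 sp => [|h c1] [-> _]; eexists.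
have lastE q : last s q = last s (s :: q) by [].
exists p'; split.
- rewrite -[path r s p']/(sorted r (s :: p')) sp' sorted_cat_cons /= rxy.
  move: rsp; rewrite -[path r s p]/(sorted r (s :: p)) sp sorted_cat_cons /=.
  by rewrite cat_path => /and3P[-> _ /and3P[]].
- by rewrite lastE sp' [RHS]lastE sp !last_cat /= last_cat.
- by move=> z; rewrite sp' sp !(mem_cat, inE); case/or4P=> ->; rewrite ?orbT.
- by move: (congr1 size sp) (congr1 size sp'); rewrite /= !size_cat /= size_cat /=; lia.
Qed.

End Sequences.

Lemma connect_uniq_path (T : finType) (r : rel T) x y :
  connect r x y -> x != y -> ~~ r x y ->
  exists p, [/\ path r x p, last x p = y, uniq (x :: p) & 1 < size p].
Proof.
case/connectP => p rxp ->{y}; case: (shortenP rxp) => p' rxp' up' _ xNy rNxy.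
exists p'; split => //.
by case: p' rxp' up' xNy rNxy => [|z [|]] //=; rewrite ?eqxx // andbT => ->.
Qed.

Section Graph.
Variables (T : finType) (e : rel T).
Hypotheses (e_sym : symmetric e) (e_irr : irreflexive e).
Implicit Types (U A B K : {set T}) (a b v x y z : T).

Definition nbhd x : {set T} := [set z | e x z].
Definition closed_nbhd x : {set T} := x |: nbhd x.
Definition common_nbhd U x y : {set T} := U :&: nbhd x :&: nbhd y.
Definition simplicial_in U v : bool := clique e (U :&: nbhd v).
(* Exposedness of xy in the induced subgraph G[U], in the form characterised
   by exposed_edgeE below. *)
Definition exposed_in U x y : bool :=
  [&& x \in U, y \in U, e x y, common_nbhd U x y != set0
    & clique e (common_nbhd U x y)].
Definition induced (X : {set T}) : rel T :=
  [rel z w | [&& z \in X, w \in X & e z w]].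
Definition exposed_except U x y : rel T :=
  [rel a b | exposed_in U a b && ([set a; b] != [set x; y])].

Lemma in_closed_nbhd x z : (z \in closed_nbhd x) = (z == x) || e x z.
Proof. by rewrite !inE. Qed.

Lemma in_common_nbhd U x y z : (z \in common_nbhd U x y) = [&& z \in U, e x z & e y z].
Proof. by rewrite !inE andbA. Qed.

Lemma cliqueP K : reflect {in K &, forall a b, a != b -> e a b} (clique e K).
Proof.
apply: (iffP forallP) => [cK a b aK bK | cK a]; last first.
  by apply/implyP => aK; apply/forallP => b; apply/implyP => bK; apply/implyP; apply: cK.
by move: (cK a); rewrite aK /= => /forallP /(_ b); rewrite bK /= => /implyP.
Qed.

Lemma subset_clique A B : A \subset B -> clique e B -> clique e A.
Proof. by move=> /subsetP sAB /cliqueP cB; apply/cliqueP => a b /sAB aB /sAB; apply: cB. Qed.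

Lemma cliqueU A B : clique e A -> clique e B ->
  {in A & B, forall a b, a != b -> e a b} -> clique e (A :|: B).
Proof.
move=> /cliqueP cA /cliqueP cB cAB; apply/cliqueP => a b.
rewrite !inE => /orP[aA|aB] /orP[bA|bB]; [exact: cA | exact: cAB | | exact: cB].
by rewrite eq_sym e_sym; apply: cAB.
Qed.

Lemma clique0 : clique e set0.
Proof. by apply/cliqueP => a b; rewrite inE. Qed.

Lemma clique1 x : clique e [set x].
Proof. by apply/cliqueP => a b /set1P-> /set1P->; rewrite eqxx. Qed.

Lemma clique2 x y : e x y -> clique e [set x; y].
Proof.
move=> exy; apply: cliqueU (clique1 _) (clique1 _) _ => a b /set1P-> /set1P->.
by rewrite exy.
Qed.

Lemma nonclique_far_vertex B S : clique e S -> ~~ clique e (B :|: S) ->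
  exists2 c, c \in B :|: S &
    (B :|: S) :\: closed_nbhd c != set0 /\ (B :|: S) :\: closed_nbhd c \subset B.
Proof.
set W := B :|: S => cS ncW.
have [/exists_inP[c cS' farc] | noS] := boolP [exists c in S, W :\: closed_nbhd c != set0].
  exists c; first by rewrite inE cS' orbT.
  split=> //; apply/subsetP => u; rewrite !inE negb_or => /andP[/andP[uc neu]] /orP[//|uS].
  by move/cliqueP: cS neu => ->; rewrite // eq_sym.
have [c cW [d dW /andP[cd ncd]]] :
    exists2 c, c \in W & exists2 d, d \in W & (c != d) && ~~ e c d.
  move: ncW => /forall_inPn[c cW /forall_inPn[d dW]]; rewrite negb_imply.
  by exists c => //; exists d.
exists c => //; split.
  by apply/set0Pn; exists d; rewrite in_setD in_closed_nbhd dW negb_or eq_sym cd ncd.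
apply/subsetP => u; rewrite in_setD in_closed_nbhd negb_or => /andP[/andP[uc ncu]].
rewrite in_setU => /orP[//|uS]; case/negP: noS; apply/exists_inP; exists u => //.
by apply/set0Pn; exists c; rewrite in_setD in_closed_nbhd cW negb_or eq_sym uc e_sym ncu.
Qed.

Lemma exposed_in_sym U : symmetric (exposed_in U).
Proof.
move=> x y; rewrite /exposed_in e_sym andbCA.
suff -> : common_nbhd U x y = common_nbhd U y x by [].
by rewrite /common_nbhd -setIA [nbhd x :&: _]setIC setIA.
Qed.

Section GlobalExposed.
Variables x y : T.
Hypothesis exy : e x y.

Let C := common_nbhd setT x y.

Lemma clique_triangle z : e x z -> e y z -> clique e ([set x; y] :|: [set z]).
Proof.
by move=> exz eyz; apply: cliqueU (clique2 exy) (clique1 z) _ => a b /set2P[]-> /set1P->.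
Qed.

Lemma sub_edge_nbhd K : clique e K -> [set x; y] \subset K -> K \subset [set x; y] :|: C.
Proof.
move=> /cliqueP cK /subsetP sxyK; apply/subsetP => z zK.
rewrite in_setU in_common_nbhd in_setT; apply/orP.
have [zxy | zNxy] := boolP (z \in [set x; y]); [by left | right].
move: zNxy; rewrite !inE negb_or => /andP[zx zy].
have [xK yK] := (sxyK x (set21 x y), sxyK y (set22 x y)).
by rewrite !cK // eq_sym.
Qed.

Lemma clique_edge_nbhd : clique e C -> clique e ([set x; y] :|: C).
Proof.
move=> cC; apply: cliqueU => //; first exact: clique2.
by move=> a z /set2P[]-> /[!in_common_nbhd] /and3P[].
Qed.

Lemma facet_edgeE : facet_edge e x y = (C == set0).
Proof.
rewrite /facet_edge /max_clique exy; apply/idP/eqP => [/maxsetP[_ maxxy] | C0].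
  apply/eqP; apply: contraT => /set0Pn[z]; rewrite in_common_nbhd => /and3P[_ exz eyz].
  have cxyz := clique_triangle exz eyz.
  have /setP/(_ z) := maxxy _ cxyz (subsetUl _ _).
  by rewrite !inE eqxx orbT => /esym/orP[]/eqP zE; rewrite zE e_irr in exz eyz.
apply/maxsetP; split => [|K cK sK]; first exact: clique2.
by apply/eqP; rewrite eqEsubset sK andbT; have := sub_edge_nbhd cK sK; rewrite C0 setU0.
Qed.

Lemma unique_max_cliqueE :
  (#|[set K | max_clique e K & [set x; y] \subset K]| == 1) = clique e C.
Proof.
apply/cards1P/idP => [[K MK] | cC].
  have inK z : z \in C -> z \in K.
    rewrite in_common_nbhd => /and3P[_ exz eyz].
    have cxyz := clique_triangle exz eyz.
    have [M maxM sM] := maxset_exists cxyz.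
    have /set1P <- : M \in [set K].
      by rewrite -MK inE; apply/andP; split; [exact: maxM | exact: subset_trans (subsetUl _ _) sM].
    by apply: (subsetP sM); rewrite !inE eqxx orbT.
  have : K \in [set K] by rewrite set11.
  rewrite -MK inE => /andP[/maxsetp cK _].
  by apply: subset_clique cK; apply/subsetP.
have maxK : max_clique e ([set x; y] :|: C).
  apply/maxsetP; split => [|K cK sK]; first exact: clique_edge_nbhd.
  apply/eqP; rewrite eqEsubset sK andbT sub_edge_nbhd //.
  exact: subset_trans (subsetUl _ _) sK.
exists ([set x; y] :|: C); apply/setP => K; rewrite !inE.
apply/andP/eqP => [[maxK' sK] | ->]; last by rewrite subsetUl.
apply/esym/(maxsetsup maxK' (maxsetp maxK)).
exact: sub_edge_nbhd (maxsetp maxK') sK.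
Qed.

End GlobalExposed.

Lemma exposed_edgeE x y : exposed_edge e x y = exposed_in setT x y.
Proof.
rewrite /exposed_edge /exposed_in !in_setT /=.
by case exy: (e x y) => //=; rewrite facet_edgeE // unique_max_cliqueE // andbC.
Qed.

Lemma induced_sym X : symmetric (induced X).
Proof. by move=> z w; rewrite /induced /= e_sym andbCA. Qed.

Lemma connect_induced_closed X z w : connect (induced X) z w -> z \in X -> w \in X.
Proof. by move=> /closed_connect-> //; move=> u v /and3P[-> ->]. Qed.

Lemma common_nbhdS U1 U2 x y : U1 \subset U2 -> common_nbhd U1 x y \subset common_nbhd U2 x y.
Proof. by move=> sU12; rewrite setSI // setSI. Qed.

Lemma common_nbhd_setD1 U v x y : common_nbhd (U :\ v) x y = common_nbhd U x y :\ v.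
Proof. by apply/setP => z; rewrite !inE -!andbA; case: (z == v). Qed.

Lemma simplicial_exposed U v a b : v \in U -> simplicial_in U v ->
  a \in U -> b \in U -> e v a -> e v b -> a != b -> exposed_in U a v.
Proof.
move=> vU sv aU bU eva evb ab.
apply/and5P; split; rewrite 1?e_sym //; last by apply: subset_clique sv; rewrite setSI // subsetIl.
apply/set0Pn; exists b; rewrite in_common_nbhd bU evb andbT.
by move/cliqueP: sv; apply; rewrite ?inE ?aU ?bU ?eva ?evb.
Qed.

Lemma exposed_except_detour U x y v a b : v \in U :\: [set x; y] -> simplicial_in U v ->
  v \in common_nbhd U a b -> a \in U -> b \in U -> a != b -> connect (exposed_except U x y) a b.
Proof.
move=> /setDP[vU vNxy] sv; rewrite in_common_nbhd => /and3P[_ eav ebv] aU bU ab.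
have avoid c : [set c; v] != [set x; y] by apply: contraNneq vNxy => <-; rewrite set22.
have [eva evb] : e v a /\ e v b by rewrite !(e_sym v).
apply: (@connect_trans _ _ v); apply: connect1; rewrite /exposed_except /=.
  by rewrite avoid andbT (simplicial_exposed vU sv aU bU).
by rewrite setUC avoid exposed_in_sym andbT (simplicial_exposed vU sv bU aU) // eq_sym.
Qed.

Lemma exposed_in_setD1 U v x y : exposed_in U x y -> v \notin [set x; y] ->
  common_nbhd (U :\ v) x y != set0 -> exposed_in (U :\ v) x y.
Proof.
case/and5P=> xU yU exy _ cC; rewrite !inE negb_or => /andP[vx vy] C'0.
rewrite /exposed_in !inE xU yU exy C'0 eq_sym vx eq_sym vy /=.
exact: subset_clique (common_nbhdS _ _ (subsetDl _ _)) cC.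
Qed.

Lemma exposed_in_setD1_lift U v a b : v \notin common_nbhd U a b ->
  exposed_in (U :\ v) a b -> exposed_in U a b.
Proof.
move=> vNC; have CE : common_nbhd U a b :\ v = common_nbhd U a b.
  by apply/setDidPl; rewrite disjoint_sym disjoints1.
rewrite /exposed_in common_nbhd_setD1 CE !inE.
by case/and5P=> /andP[_ ->] /andP[_ ->] -> -> ->.
Qed.

Lemma cycle_has_edgeC c x y : cycle_has_edge c x y = cycle_has_edge c y x.
Proof. exact: orbC. Qed.

Lemma chord_shortcut a s p x y : uniq (a :: s :: p) -> path e s p ->
  x \in s :: p -> y \in s :: p -> e x y -> ~~ cycle_has_edge (a :: s :: p) x y ->
  exists p', [/\ path e s p', last s p' = last s p,
                 {subset s :: p' <= s :: p} & size p' < size p].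
Proof.
move=> uc sp xq yq exy nxy; have xy : x != y by apply: contraTneq exy => ->; rewrite e_irr.
wlog [c1 [c2 [c3 sq]]] : x y xq yq exy nxy xy /
    exists c1 c2 c3, s :: p = c1 ++ x :: c2 ++ y :: c3.
  move=> gen; have [c1 [c2 [c3 [sq|sq]]]] := mem_split2 xq yq xy.
    by apply: (gen x y) => //; exists c1, c2, c3.
  apply: (gen y x); rewrite 1?e_sym 1?eq_sym //; last by exists c1, c2, c3.
  by rewrite cycle_has_edgeC.
case: c2 sq => [|w c2] sq; last exact: path_shortcut sq sp exy.
have acq : a :: s :: p = (a :: c1) ++ x :: y :: c3 by rewrite sq.
case/negP: nxy; rewrite /cycle_has_edge acq next_cat_cons2 -?acq // eqxx andbT.
by rewrite inE xq orbT.
Qed.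

Section Chordal.
Hypothesis e_chordal : chordal e.

Lemma chordal_chord c : is_graph_cycle e c -> 3 < size c ->
  exists x y, [/\ x \in c, y \in c, e x y & ~~ cycle_has_edge c x y].
Proof.
move=> gc c_gt3; have : ~~ induced_cycle e c by apply: contraTN c_gt3 => /e_chordal ->.
rewrite /induced_cycle gc => /forallPn[x /forallPn[y]].
by rewrite negb_imply => /andP[/andP[/andP[xc yc] exy] nxy]; exists x, y.
Qed.

Lemma chordal_nbhd_path a s p : e a s -> e a (last s p) -> s != last s p -> path e s p ->
  {subset s :: p <= [set s; last s p] :|: ~: closed_nbhd a} -> e s (last s p).
Proof.
have [n] := ubnP (size p); elim: n s p => // n IH s p ltpn eas eat st sp far.
move: eat st far; case: (shortenP sp) => {sp} p' sp uc sub eat st far; apply/idPn => nst.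
have p'_gt1 : 1 < size p'.
  by case: p' sp st nst {eat uc sub far} => [|z [|]] //=; rewrite ?eqxx // andbT => ->.
set t := last s p' in eat st nst far *.
have far' : {subset s :: p' <= [set s; t] :|: ~: closed_nbhd a}.
  by move=> z /predU1P[->|/sub zp]; apply: far; rewrite inE ?eqxx ?zp ?orbT.
have aNq : a \notin s :: p'.
  apply/negP => /far'; rewrite !inE eqxx /= orbF => /orP[]/eqP aE.
    by move: eas; rewrite -aE e_irr.
  by move: eat; rewrite -aE e_irr.
have uc' : uniq (a :: s :: p') by rewrite cons_uniq aNq uc.
have gc : is_graph_cycle e (a :: s :: p').
  by rewrite /is_graph_cycle uc' /= ltnS ltnW //= eas rcons_path sp e_sym eat.
(* the chord of the cycle a, s, ..., t cannot involve a: it short-cuts the path *)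
have [x [y [xc yc exy nxy]]] := chordal_chord gc p'_gt1.
have a_chord z : z \in a :: s :: p' -> e a z -> cycle_has_edge (a :: s :: p') a z.
  move=> zc eaz; have /far' : z \in s :: p'.
    by move: zc; rewrite inE => /predU1P[za|//]; move: eaz; rewrite za e_irr.
  rewrite !inE eaz orbT orbF => /orP[]/eqP->.
    by rewrite /cycle_has_edge mem_head /= eqxx /= eqxx.
  by apply/orP; right; rewrite -[t]/(last a (s :: p')) mem_last next_last //= aNq.
have off_a z w : z \in a :: s :: p' -> w \in a :: s :: p' -> e z w ->
    ~~ cycle_has_edge (a :: s :: p') z w -> z \in s :: p'.
  by rewrite inE => /predU1P[->|//] wc eaw; rewrite a_chord.
have xq := off_a x y xc yc exy nxy.
have yq : y \in s :: p' by apply: off_a yc xc _ _; rewrite 1?e_sym 1?cycle_has_edgeC.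
have [p'' [sp'' lastp'' sub'' ltp'']] := chord_shortcut uc' sp xq yq exy nxy.
have ltp''n : size p'' < n.
  by apply: leq_trans ltp'' (leq_trans (uniq_leq_size _ sub) ltpn); case/andP: uc.
apply: (negP nst); rewrite /t -lastp''; apply: IH; rewrite ?lastp'' //.
by move=> z /sub''; apply: far'.
Qed.

Section FarComponent.
Variables (U : {set T}) (a b : T).
Hypotheses (aU : a \in U) (bX : b \in U :\: closed_nbhd a).

(* far_border is the neighbourhood in U of the component far_component of b
   in G[U] - N[a] (nbhd_far_component); it separates that component from a,
   hence it is a clique. *)
Definition far_component : {set T} :=
  [set z | connect (induced (U :\: closed_nbhd a)) b z].
Definition far_border : {set T} :=
  U :&: nbhd a :&: \bigcup_(w in far_component) nbhd w.

Lemma mem_far_component : b \in far_component.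
Proof. by rewrite inE connect0. Qed.

Lemma far_component_sub : far_component \subset U :\: closed_nbhd a.
Proof. by apply/subsetP => z; rewrite inE => /connect_induced_closed; apply. Qed.

Lemma nbhd_far_component u : u \in far_component ->
  U :&: nbhd u \subset far_component :|: far_border.
Proof.
move=> uB; have uX := subsetP far_component_sub u uB.
have /setDP[_] := uX; rewrite in_closed_nbhd negb_or => /andP[ua neau].
apply/subsetP => v; rewrite !inE => /andP[vU euv].
case: (boolP (v \in closed_nbhd a)) => [|vNa].
  rewrite in_closed_nbhd => /orP[/eqP va|eav].
    by move: euv; rewrite va e_sym (negbTE neau).
  by rewrite vU eav /=; apply/orP; right; apply/bigcupP; exists u; rewrite // inE.
apply/orP; left; apply: connect_trans (_ : connect _ u v); first by move: uB; rewrite inE.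
by apply: connect1; rewrite /induced /= uX euv andbT; apply/setDP.
Qed.

Lemma clique_far_border : clique e far_border.
Proof.
set X := U :\: closed_nbhd a.
apply/cliqueP => s t; rewrite !inE.
move=> /andP[/andP[_ eas] /bigcupP[w1 w1B]]; rewrite inE => esw1.
move=> /andP[/andP[_ eat] /bigcupP[w2 w2B]]; rewrite inE => etw2 st.
have /connectP[q w1q w2E] : connect (induced X) w1 w2.
  apply: (@connect_trans _ _ b); last by move: w2B; rewrite inE.
  by rewrite (sym_connect_sym (induced_sym X)); move: w1B; rewrite inE.
have w1X : w1 \in X by apply: (subsetP far_component_sub).
have := @chordal_nbhd_path a s (w1 :: rcons q t); rewrite /= last_rcons; apply => //.
  rewrite [e s w1]e_sym esw1 rcons_path -w2E etw2 andbT /=.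
  by apply: sub_path w1q => z w /and3P[].
move=> z; rewrite -!rcons_cons mem_rcons inE => /predU1P[->|].
  by rewrite !inE eqxx orbT.
rewrite inE => /predU1P[->|zq]; first by rewrite !inE eqxx.
have /setDP[_ zNa] : z \in X.
  by apply: connect_induced_closed w1X; apply: path_connect w1q _ zq.
by rewrite inE in_setC zNa orbT.
Qed.

Lemma far_closure_proper : far_component :|: far_border \proper U.
Proof.
apply/properP; split.
  rewrite subUset (subset_trans far_component_sub (subsetDl _ _)) /=.
  by rewrite /far_border -setIA subsetIl.
have aNB : a \notin far_component.
  by apply/negP => /(subsetP far_component_sub a); rewrite !inE eqxx.
by exists a; rewrite // in_setU negb_or aNB !inE e_irr andbF.
Qed.

Lemma simplicial_far_lift u : u \in far_component ->
  simplicial_in (far_component :|: far_border) u -> simplicial_in U u.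
Proof.
move=> uB; apply: subset_clique.
by rewrite subsetI subsetIr andbT nbhd_far_component.
Qed.

End FarComponent.

(* The induction passes to the component together with its
   border: by clique_far_border, a simplicial vertex of that smaller graph can
   be chosen inside the component, and it stays simplicial in U. *)
Lemma simplicial_outside_closed_nbhd U a : a \in U -> U :\: closed_nbhd a != set0 ->
  exists2 u, u \in U :\: closed_nbhd a & simplicial_in U u.
Proof.
have [n] := ubnP #|U|; elim: n U a => // n IH U a ltUn aU /set0Pn[b bX].
set B := far_component U a b; set W := B :|: far_border U a b.
have lift u : u \in B -> simplicial_in W u ->
    exists2 u, u \in U :\: closed_nbhd a & simplicial_in U u.
  move=> uB /(simplicial_far_lift bX uB) su.
  by exists u => //; apply: (subsetP (far_component_sub bX)).
have [cW | ncW] := boolP (clique e W).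
  by apply: (lift b (mem_far_component U a b)); apply: subset_clique cW; apply: subsetIl.
have [c cW [farc farB]] := nonclique_far_vertex (clique_far_border bX) ncW.
have ltWn : #|W| < n by apply: leq_trans (proper_card (far_closure_proper aU bX)) ltUn.
by have [u /(subsetP farB) uB /lift] := IH W c ltWn cW farc; apply.
Qed.

Lemma simplicial_off_edge U x y z : e x y -> z \in common_nbhd U x y ->
  exists2 v, v \in U :\: [set x; y] & simplicial_in U v.
Proof.
move=> exy; rewrite in_common_nbhd => /and3P[zU exz eyz].
have [cU | ncU] := boolP (clique e U).
  exists z; last by apply: subset_clique cU; apply: subsetIl.
  rewrite in_setD zU andbT !inE negb_or.
  by apply/andP; split; apply/eqP => zE; [move: exz | move: eyz]; rewrite zE e_irr.
have ncU0 : ~~ clique e (U :|: set0) by rewrite setU0.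
have [a] := nonclique_far_vertex clique0 ncU0; rewrite setU0 => aU [farU _].
have [u /setDP[uU ufar] su] := simplicial_outside_closed_nbhd aU farU.
have farU' : U :\: closed_nbhd u != set0.
  apply/set0Pn; exists a; rewrite in_setD aU andbT.
  by move: ufar; rewrite !in_closed_nbhd !negb_or eq_sym e_sym.
have [u' /setDP[u'U u'far] su'] := simplicial_outside_closed_nbhd uU farU'.
have [uxy | uNxy] := boolP (u \in [set x; y]); last by exists u; rewrite // in_setD uNxy.
have [u'xy | u'Nxy] := boolP (u' \in [set x; y]); last by exists u'; rewrite // in_setD u'Nxy.
move: u'far; rewrite in_closed_nbhd negb_or => /andP[].
by case/set2P: uxy => ->; case/set2P: u'xy => ->; rewrite ?eqxx // ?exy // e_sym exy.
Qed.

Lemma exposed_in_connect U x y : exposed_in U x y -> connect (exposed_except U x y) x y.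
Proof.
have [n] := ubnP #|U|; elim: n U => // n IH U ltUn xyU.
have /and5P[xU yU exy /set0Pn[z zC] _] := xyU.
have [v vUxy sv] := simplicial_off_edge exy zC.
have /setDP[vU vNxy] := vUxy.
have detour a b : a \in U -> b \in U -> a != b -> v \in common_nbhd U a b ->
    connect (exposed_except U x y) a b.
  by move=> aU bU ab vC; apply: exposed_except_detour vUxy sv vC aU bU ab.
have xy : x != y by apply: contraTneq exy => ->; rewrite e_irr.
have [C'0 | C'n0] := eqVneq (common_nbhd (U :\ v) x y) set0.
  apply: detour => //; move/eqP: C'0; apply: contraTT => vNC; apply/set0Pn; exists z.
  by rewrite common_nbhd_setD1 in_setD1 zC andbT; apply: contraNneq vNC => <-.
have ltU'n : #|U :\ v| < n by move: ltUn; rewrite (cardsD1 v U) vU.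
apply: connect_sub (IH _ ltU'n (exposed_in_setD1 xyU vNxy C'n0)) => a b /andP[abU' ne].
have /and3P[aU' bU' eab] := abU'.
have [aU bU] : a \in U /\ b \in U by move: aU' bU'; rewrite !in_setD1 => /andP[_ ->] /andP[_ ->].
have [vC | vNC] := boolP (v \in common_nbhd U a b).
  by apply: detour => //; apply: contraTneq eab => ->; rewrite e_irr.
by apply: connect1; rewrite /exposed_except /= ne andbT (exposed_in_setD1_lift vNC).
Qed.
End Chordal.
End Graph.

Theorem theorem2p12 (T : finType) (e : rel T)
  (e_sym : symmetric e) (e_irr : irreflexive e) :
  chordal e ->
  forall x y : T, exposed_edge e x y ->
  exists s : seq T,
    [/\ is_graph_cycle e s, cycle_has_edge s x y & cycle (exposed_edge e) s].
Proof.
move=> e_chordal x y; rewrite (exposed_edgeE e_sym e_irr) => xy.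
have exy : e x y by case/and5P: xy.
have xNy : x != y by apply: contraTneq exy => ->; rewrite e_irr.
have xyNexcept : ~~ exposed_except e setT x y x y by rewrite /exposed_except /= eqxx andbF.
have [p [xp lastp up p_gt1]] :=
  connect_uniq_path (exposed_in_connect e_sym e_irr e_chordal xy) xNy xyNexcept.
have exposedW : subrel (exposed_except e setT x y) (exposed_edge e).
  by move=> a b /andP[]; rewrite exposed_edgeE.
exists (x :: p); split.
- rewrite /is_graph_cycle up ltnS p_gt1 /= rcons_path lastp e_sym exy andbT.
  by apply: sub_path _ _ _ xp => a b /andP[/and5P[_ _ ->]].
- by apply/orP; right; rewrite -lastp mem_last next_last ?eqxx.
- rewrite /= rcons_path lastp exposed_edgeE // exposed_in_sym // xy andbT.
  exact: sub_path exposedW _ _ xp.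
Qed.
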